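(* Let $\mathcal{S}$ be the stabilizer group of an $[[n,1,3]]$ stabilizer code on $n$ qubits. Let $g \in \mathcal{S}$ be a stabilizer generator of weight $w_g > 3$, written as $g = P_{a_1} P_{a_2} \cdots P_{a_{w_g}}$, where $a_1, \dots, a_{w_g}$ are the distinct qubits on which $g$ acts nontrivially, listed in the order in which the ancilla-controlled gates $\mathrm{C}\text{-}P_{a_1}, \dots, \mathrm{C}\text{-}P_{a_{w_g}}$ are applied during bare-ancilla syndrome extraction, and each $P_{a_i} \in \{X, Y, Z\}$ acts on qubit $a_i$. For $1 \le i \le w_g$ let $\rho_g(a_i) = \prod_{j \ge i} P_{a_j}$ (the hook error on the data qubits caused by a single Pauli error on the ancilla immediately before the gate $\mathrm{C}\text{-}P_{a_i}$), and let $$\mathcal{U}_g = \{\rho_g(a_i) : 1\le i\le w_g,\ w(\rho_g(a_i)) > 1 \text{ and } w(\rho_g(a_i)\, s) > 1 \text{ for all } s \in \mathcal{S}\}.$$ Then $|\mathcal{U}_g| \le w_g - 3$.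
   Context: For a Pauli operator $E$ on $n$ qubits, $w(E)$ denotes its weight, i.e. the number of qubits on which $E$ acts nontrivially (global phases are ignored). The weight $w_g$ of a generator $g$ is its weight in this sense. Bare-ancilla syndrome extraction of $g$: a single ancilla is prepared in $|+\rangle$, the ancilla-controlled gates $\mathrm{C}\text{-}P_{a_1}, \dots, \mathrm{C}\text{-}P_{a_{w_g}}$ targeting the data qubits $a_1,\dots,a_{w_g}$ are applied in this order, and the ancilla is measured in the $X$ basis. Elements of $\mathcal{U}_g$ are called uncorrectable hook errors. *)

From mathcomp Require Import all_boot all_order all_algebra.
Set Implicit Arguments. Unset Strict Implicit. Unset Printing Implicit Defensive.
Import GRing.Theory.

(* Single-qubit Pauli (modulo phase) in symplectic form (x, z):
   I = (false,false), X = (true,false), Z = (false,true), Y = (true,true). *)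
Definition pauli1 := (bool * bool)%type.
Definition pI : pauli1 := (false, false).

(* Exponent k such that  a * b = i^k * (a xor b)  for single-qubit Paulis
   (Y is the Hermitian Y = iXZ). *)
Definition phase1 (a b : pauli1) : nat :=
  match a, b with
  | (true, false), (false, true) => 3   (* X Z = -i Y *)
  | (false, true), (true, false) => 1   (* Z X =  i Y *)
  | (true, false), (true, true)  => 1   (* X Y =  i Z *)
  | (true, true),  (true, false) => 3   (* Y X = -i Z *)
  | (true, true),  (false, true) => 1   (* Y Z =  i X *)
  | (false, true), (true, true)  => 3   (* Z Y = -i X *)
  | _, _ => 0
  end.

Definition xor1 (a b : pauli1) : pauli1 := (a.1 (+) b.1, a.2 (+) b.2).

(* An n-qubit Pauli operator  i^k * P_1 (x) ... (x) P_n, k in Z/4. *)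
Definition pauli (n : nat) := ('Z_4 * {ffun 'I_n -> pauli1})%type.

Definition pmul n (E F : pauli n) : pauli n :=
  ((E.1 + F.1 + \sum_(i < n) (phase1 (E.2 i) (F.2 i))%:R)%R,
   [ffun i => xor1 (E.2 i) (F.2 i)]).

Definition pid n : pauli n := (0%R, [ffun => pI]).
Definition pminus_id n : pauli n := (2%:R%R, [ffun => pI]).

Definition weight n (E : pauli n) : nat := #|[set i | E.2 i != pI]|.

Definition pcommute n (E F : pauli n) : Prop := pmul E F = pmul F E.

Definition mul_closed n (T : {set pauli n}) : Prop :=
  forall E F, E \in T -> F \in T -> pmul E F \in T.

Definition stabilizer_group n (S : {set pauli n}) : Prop :=
  [/\ pid n \in S, mul_closed S,
      (forall E F, E \in S -> F \in S -> pcommute E F)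
    & pminus_id n \notin S].

Definition generates n (S G : {set pauli n}) : Prop :=
  G \subset S /\
  forall T : {set pauli n}, G \subset T -> pid n \in T -> mul_closed T -> S \subset T.

Definition independent_generators n (S G : {set pauli n}) : Prop :=
  generates S G /\ forall x, x \in G -> ~ generates S (G :\ x).

Definition logical n (S : {set pauli n}) (E : pauli n) : Prop :=
  (forall s, s \in S -> pcommute E s) /\ (forall c : 'Z_4, (c, E.2) \notin S).

Definition code_distance n (S : {set pauli n}) (d : nat) : Prop :=
  (forall E, logical S E -> d <= weight E) /\
  exists E, logical S E /\ weight E = d.

Definition stabilizer_code n (k d : nat) (S G : {set pauli n}) : Prop :=
  [/\ stabilizer_group S, independent_generators S G, #|G| = n - k & code_distance S d].

(* hook error rho_g(a_i) = prod_{j >= i} P_{a_j}, where the gates act on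
   qubits a 0, ..., a (w-1) in that order *)
Definition hook n (g : pauli n) w (a : 'I_w -> 'I_n) (i : 'I_w) : pauli n :=
  (0%R, [ffun q => if [exists j : 'I_w, (i <= j) && (a j == q)] then g.2 q else pI]).

Definition uncorrectable_hooks n (S : {set pauli n}) (g : pauli n) w
    (a : 'I_w -> 'I_n) : {set pauli n} :=
  [set hook g a i | i in [pred i : 'I_w | (1 < weight (hook g a i)) &&
       [forall s in S, 1 < weight (pmul (hook g a i) s)]]].

(** The hook error [hook g a i] (with 0-based [i]) is supported on the qubits
    [a i, ..., a (w-1)], so its weight is at most [w - i]; multiplying it by
    [g], which lies in the stabilizer group, leaves [P_(a 0) ... P_(a (i-1))]
    up to phase, of weight at most [i]. An uncorrectable hook therefore needs
    [2 <= i <= w - 2], which leaves [w - 3] indices. Only [g \in S] and the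
    support of [g] enter the argument; the code parameters and the
    injectivity of [a] do not. *)

From mathcomp Require Import all_boot all_order all_algebra.
From mathcomp Require Import zify.

Set Implicit Arguments.
Unset Strict Implicit.
Unset Printing Implicit Defensive.

Lemma card_ord_lt w i : i <= w -> #|[set j : 'I_w | j < i]| = i.
Proof.
move=> le_iw.
have -> : [set j : 'I_w | j < i] = widen_ord le_iw @: [set: 'I_i].
  apply/setP => j; rewrite !inE; apply/idP/imsetP => [lt_ji | [k _ ->]].
    by exists (Ordinal lt_ji); last exact: val_inj.
  exact: ltn_ord k.
by rewrite card_imset ?cardsT ?card_ord // => k l /(congr1 val) /= /val_inj.
Qed.

Lemma card_ord_ge w i : i <= w -> #|[set j : 'I_w | i <= j]| = w - i.
Proof.
move=> le_iw; rewrite cardsCs card_ord -[in RHS](card_ord_lt le_iw).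
by congr (_ - _); apply: eq_card => j; rewrite !inE -ltnNge.
Qed.

Lemma weight_le_card n (E : pauli n) (A : {set 'I_n}) :
  (forall q, q \notin A -> E.2 q = pI) -> weight E <= #|A|.
Proof.
move=> offA; apply: subset_leq_card; apply/subsetP => q.
by rewrite inE; apply: contraR => /offA ->.
Qed.

Lemma xor1_self (x : pauli1) : xor1 x x = pI.
Proof. by case: x => [[] []]. Qed.

Lemma xor1_pIl (x : pauli1) : xor1 pI x = x.
Proof. by case: x => [[] []]. Qed.

Section Hooks.

Variables (n : nat) (g : pauli n) (w : nat) (a : 'I_w -> 'I_n).

Lemma weight_hook (i : 'I_w) : weight (hook g a i) <= w - i.
Proof.
apply: leq_trans (weight_le_card (A := a @: [set j : 'I_w | i <= j]) _) _.
  move=> q q_out; rewrite /hook ffunE.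
  case: existsP => // -[j /andP [le_ij /eqP a_j]].
  by rewrite -a_j imset_f ?inE in q_out.
apply: leq_trans (leq_imset_card _ _) _.
by rewrite card_ord_ge // ltnW.
Qed.

Hypothesis g_off : forall q, q \notin codom a -> g.2 q = pI.

Lemma weight_hook_mul (i : 'I_w) : weight (pmul (hook g a i) g) <= i.
Proof.
apply: leq_trans (weight_le_card (A := a @: [set j : 'I_w | j < i]) _) _.
  move=> q q_out; rewrite /pmul /hook /= !ffunE.
  case: existsP => [_ | no_hook]; first exact: xor1_self.
  rewrite xor1_pIl; apply: g_off; apply: contra q_out => /codomP [j q_aj].
  rewrite q_aj imset_f // inE ltnNge; apply/negP => le_ij.
  by apply: no_hook; exists j; rewrite le_ij q_aj eqxx.
apply: leq_trans (leq_imset_card _ _) _.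
by rewrite card_ord_lt // ltnW.
Qed.

End Hooks.

Theorem lemma1 (n : nat) (S G : {set pauli n}) (g : pauli n)
    (w : nat) (a : 'I_w -> 'I_n) :
  stabilizer_code 1 3 S G ->
  g \in G ->
  injective a ->
  (forall q : 'I_n, (q \in codom a) = (g.2 q != pI)) ->
  3 < w ->
  #|uncorrectable_hooks S g a| <= w - 3.
Proof.
move=> [_ [[sub_GS _] _] _ _] gG _ supp_g lt3w.
have gS : g \in S by apply: (subsetP sub_GS).
have g_off q : q \notin codom a -> g.2 q = pI by rewrite supp_g negbK => /eqP.
have card_mid : #|[set i : 'I_w | 2 <= i] :\: [set i : 'I_w | w.-1 <= i]| = w - 3.
  have sub_mid : [set i : 'I_w | w.-1 <= i] \subset [set i : 'I_w | 2 <= i].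
    by apply/subsetP => i; rewrite !inE; lia.
  by rewrite cardsDS // !card_ord_ge; lia.
rewrite -card_mid /uncorrectable_hooks.
apply: leq_trans (leq_imset_card _ _) (subset_leq_card _).
apply/subsetP => i /andP [hook_heavy /forallP /(_ g)]; rewrite gS /= => mul_heavy.
have := leq_trans mul_heavy (weight_hook_mul g_off i).
have := leq_trans hook_heavy (weight_hook g a i).
by rewrite !inE; lia.
Qed.
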